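(* Let $D$ be a knot diagram that is ascending from a base point $b$, and regard $D$ as a $(1,1)$-tangle diagram by moving $b$ to infinity via a planar isotopy of $S^2$. Then a Reidemeister I, II, or III move can be applied to every bounded $1$-, $2$-, or $3$-sided face of $D$, respectively.
   Context: An oriented knot diagram is ascending from a point $b$ (not a crossing) if, travelling along the knot from $b$ in the direction of the orientation, every crossing is first met along its under-strand and later along its over-strand. A $2$-sided face admits a Reidemeister II move when one of its edges is the over-strand at both its crossings; a $3$-sided face admits a Reidemeister III move when one of its edges is the over-strand at both of its crossings. *)

From mathcomp Require Import all_boot.
Set Implicit Arguments. Unset Strict Implicit. Unset Printing Implicit Defensive.

(* A knot diagram with n crossings is encoded by its N = 2n "passages":
   travelling along the knot from the base point b (which lies on an edge,
   not at a crossing) we meet the passages 0, 1, ..., N-1 in this order.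
   - [kd_partner p] is the other passage through the same crossing;
   - [kd_over p] says the strand is the over-strand at passage p;
   - [kd_sign p] records the planar local picture at the crossing of p:
     going counterclockwise around that crossing, the half-edge leaving along
     passage p is followed by the half-edge leaving along the partner passage
     (true) or by the half-edge arriving along the partner passage (false).
   Edge i runs from passage i to passage i+1 (mod N); the base point b lies on
   edge N-1 (from passage N-1 to passage 0).  Darts (half-edges) are pairs
   (i, false) = tail of edge i, (i, true) = head of edge i.
   Faces are the orbits of the face permutation [kd_phi] = sigma o alpha of
   the resulting rotation system; planarity (embedding in S^2) is expressed
   by Euler's formula: #faces = #crossings + 2. *)

Definition dart N := ('I_N * bool)%type.

Definition outd N (p : 'I_N) : dart N := (p, false).
Definition ind N (p : 'I_N) : dart N := (ord_pred p, true).
Definition dart_passage N (d : dart N) : 'I_N :=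
  if d.2 then ordS d.1 else d.1.

Record knot_diagram (N : nat) := KnotDiagram {
  kd_partner : 'I_N -> 'I_N;
  kd_over : 'I_N -> bool;
  kd_sign : 'I_N -> bool;
  kd_partner_invol : involutive kd_partner;
  kd_partner_neq : forall p, kd_partner p != p;
  kd_over_partner : forall p, kd_over (kd_partner p) = ~~ kd_over p;
  kd_sign_partner : forall p, kd_sign (kd_partner p) = ~~ kd_sign p
}.

Section KD.
Variables (N : nat) (D : knot_diagram N).

Definition kd_alpha (d : dart N) : dart N := (d.1, ~~ d.2).

(* rotation sigma: next half-edge counterclockwise around the crossing *)
Definition kd_sigma (d : dart N) : dart N :=
  let p := dart_passage d in
  let q := kd_partner D p in
  if ~~ d.2 then (if kd_sign D p then outd q else ind q)
  else (if kd_sign D p then ind q else outd q).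

Definition kd_phi (d : dart N) : dart N := kd_sigma (kd_alpha d).

(* the diagram is planar (lives on S^2): Euler's formula V - E + F = 2
   with V = N/2 crossings and E = N edges *)
Definition kd_planar : Prop :=
  fcard kd_phi (predT : pred (dart N)) = N./2 + 2.

(* ascending from b: each crossing is met first as under, later as over *)
Definition ascending : Prop :=
  forall p : 'I_N, kd_over D p = (kd_partner D p < p)%N.

Definition base_edge (i : 'I_N) : bool := (i.+1 == N)%N.

(* the face of dart d, viewed in the (1,1)-tangle obtained by sending b to
   infinity, is bounded iff its boundary does not contain the edge of b *)
Definition bounded_face (d : dart N) : bool :=
  [forall d' : dart N, fconnect kd_phi d d' ==> ~~ base_edge d'.1].

Definition face_sides (d : dart N) : nat := order kd_phi d.

Definition over_both (i : 'I_N) : bool := kd_over D i && kd_over D (ordS i).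

(* Reidemeister I: the single edge of the 1-sided face is a loop starting and
   ending at the same crossing *)
Definition admits_R1 (d : dart N) : Prop :=
  kd_partner D d.1 = ordS d.1.

Definition admits_R2 (d : dart N) : Prop :=
  exists2 d', fconnect kd_phi d d' & over_both d'.1.
Definition admits_R3 (d : dart N) : Prop :=
  exists2 d', fconnect kd_phi d d' & over_both d'.1.

End KD.

(* An ascending diagram is traversed in increasing order of edge numbers, and
   at every crossing the strand traversed later is the over-strand.  Hence in
   a bounded face with at least two sides the edge with the largest number is
   the over-strand at both of its crossings, since its two neighbours along
   the face boundary carry smaller numbers; a neighbour cannot be the same
   edge, because consecutive darts of a face meet at a crossing, i.e. at two
   distinct passages.  Boundedness rules out the wrap-around through the base
   point, where the numbering is not monotone.  A 1-sided face is a single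
   edge whose two ends lie at the same crossing, which is a Reidemeister I
   kink for any diagram. *)
From mathcomp Require Import all_boot.

Lemma fconnect_fixed [T : finType] [f : T -> T] [x y : T] :
  injective f -> f y = y -> fconnect f x y -> x = y.
Proof.
move=> injf fy_y; rewrite fconnect_sym // => /iter_findex <-.
exact: iter_fix.
Qed.

Section KnotDiagramFaces.
Variables (N : nat) (D : knot_diagram N).

Local Notation sigma := (kd_sigma D).
Local Notation phi := (kd_phi D).
Local Notation partner := (kd_partner D).

Lemma dart_of_passage (d : dart N) :
  d = if d.2 then ind (dart_passage d) else outd (dart_passage d).
Proof. by case: d => i [] //; rewrite /ind /= ordSK. Qed.

Lemma passage_ind (p : 'I_N) : dart_passage (ind p) = p.
Proof. exact: ord_predK. Qed.

Lemma passage_sigma (d : dart N) :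
  dart_passage (sigma d) = partner (dart_passage d).
Proof. by rewrite /kd_sigma; do 2 case: ifP => _ //; rewrite passage_ind. Qed.

Lemma sigma_outd (p : 'I_N) :
  sigma (outd p) = if kd_sign D p then outd (partner p) else ind (partner p).
Proof. by []. Qed.

Lemma sigma_ind (p : 'I_N) :
  sigma (ind p) = if kd_sign D p then ind (partner p) else outd (partner p).
Proof. by rewrite /kd_sigma passage_ind. Qed.

Lemma sigma4K (d : dart N) : sigma (sigma (sigma (sigma d))) = d.
Proof.
rewrite (dart_of_passage d); case: d.2; move: (dart_passage d) => p;
  case sign_p: (kd_sign D p);
  by do 4 rewrite ?sigma_outd ?sigma_ind ?kd_sign_partner ?kd_partner_invol ?sign_p /=.
Qed.

Lemma alphaK : involutive (@kd_alpha N).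
Proof. by case=> i b; rewrite /kd_alpha negbK. Qed.

Lemma phi_inj : injective phi.
Proof.
apply: inj_comp (inv_inj alphaK).
exact: can_inj (fun d => sigma (sigma (sigma d))) sigma4K.
Qed.

Lemma passage_phi (d : dart N) :
  dart_passage (phi d) = partner (dart_passage (kd_alpha d)).
Proof. exact: passage_sigma. Qed.

Lemma phi_neq_alpha (d : dart N) : phi d != kd_alpha d.
Proof.
apply/eqP=> phi_d; have := kd_partner_neq D (dart_passage (kd_alpha d)).
by rewrite -passage_phi phi_d eqxx.
Qed.

Lemma dart_same_edge (x y : dart N) : x.1 = y.1 -> x = y \/ x = kd_alpha y.
Proof. by case: x y => i [] [j []] /= ->; [left | right | right | left]. Qed.

Lemma phi_edge_neq {d : dart N} : phi d != d -> (phi d).1 != d.1.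
Proof.
move=> phi_d_neq; apply/eqP=> /dart_same_edge [] phi_d.
- by move: phi_d_neq; rewrite phi_d eqxx.
- by move: (phi_neq_alpha d); rewrite phi_d eqxx.
Qed.

Lemma over_both_dart (d : dart N) :
  over_both D d.1 =
  kd_over D (dart_passage d) && kd_over D (dart_passage (kd_alpha d)).
Proof. by case: d => i [] //=; rewrite andbC. Qed.

Lemma passage_le (d : dart N) : dart_passage d <= d.1.+1.
Proof. by rewrite /dart_passage; case: ifP => _ //=; rewrite leq_mod. Qed.

Lemma passage_ge {d : dart N} : d.1.+1 < N -> d.1 <= dart_passage d.
Proof.
by move=> d_lt; rewrite /dart_passage; case: ifP => _ //=; rewrite modn_small.
Qed.

Lemma face_sides1 (d : dart N) : (face_sides D d == 1) = (phi d == d).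
Proof.
apply/eqP/eqP=> [sides1 | fixed_d].
  by have := iter_order phi_inj d; rewrite -/(face_sides D d) sides1.
apply/eqP; rewrite eqn_leq order_gt0 andbT /face_sides.
by apply: (@order_le_cycle _ _ [:: d]); rewrite ?inE //= fixed_d eqxx.
Qed.

Lemma admits_R1_fixed (d : dart N) : phi d = d -> admits_R1 D d.
Proof.
move/(congr1 (@dart_passage N)); rewrite passage_phi /admits_R1.
case: d => i [] /=; rewrite /kd_alpha /dart_passage //= => partner_i.
by rewrite -[in LHS]partner_i kd_partner_invol.
Qed.

Lemma bounded_face_edge {d c : dart N} :
  bounded_face D d -> fconnect phi d c -> c.1.+1 < N.
Proof.
move=> /forallP/(_ c) /implyP bd /bd; rewrite /base_edge ltn_neqAle => -> /=.
exact: ltn_ord.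
Qed.

Hypothesis asc : ascending D.

Lemma over_later_edge (x y : dart N) :
  y.1.+1 < N -> x.1 < y.1 ->
  partner (dart_passage x) = dart_passage y -> kd_over D (dart_passage y).
Proof.
move=> y_lt xy_lt partner_xy.
rewrite asc -partner_xy kd_partner_invol ltn_neqAle partner_xy.
rewrite (leq_trans (passage_le x)) ?(leq_trans xy_lt) ?passage_ge // andbT.
apply: contra_neq (kd_partner_neq D (dart_passage x)) => /val_inj same_passage.
by rewrite partner_xy same_passage.
Qed.

Lemma over_both_local_max {p c : dart N} :
  phi p = c -> c.1.+1 < N -> p.1 < c.1 -> (phi c).1 < c.1 -> over_both D c.1.
Proof.
move=> phi_p c_lt p_lt next_lt; rewrite over_both_dart.
apply/andP; split.
- by apply: (@over_later_edge (kd_alpha p)); rewrite // -phi_p passage_phi.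
- by apply: (@over_later_edge (phi c)); rewrite // passage_phi kd_partner_invol.
Qed.

Lemma bounded_face_over_both (d : dart N) :
  bounded_face D d -> phi d != d ->
  exists2 c, fconnect phi d c & over_both D c.1.
Proof.
move=> bd phi_d_neq.
have [c face_c c_max] :=
  @arg_maxnP _ d (fconnect phi d) (fun c : dart N => val c.1) (connect0 _ d).
have moves c' : fconnect phi d c' -> phi c' != c'.
  move=> face_c'; apply: contra_neq phi_d_neq => fixed_c'.
  by rewrite (fconnect_fixed phi_inj fixed_c' face_c').
set p := finv phi c.
have phi_p : phi p = c by exact: f_finv phi_inj c.
have face_p : fconnect phi d p by exact: connect_trans face_c (fconnect_finv _ _).
have face_next : fconnect phi d (phi c) by exact: connect_trans face_c (fconnect1 _ _).
have below x : fconnect phi d x -> x.1 != c.1 -> x.1 < c.1.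
  by move=> face_x x_neq; rewrite ltn_neqAle val_eqE x_neq; exact: c_max.
exists c => //; apply: (over_both_local_max phi_p (bounded_face_edge bd face_c)).
- apply: (below _ face_p); rewrite eq_sym -phi_p.
  exact: phi_edge_neq (moves p face_p).
- exact: below face_next (phi_edge_neq (moves c face_c)).
Qed.

End KnotDiagramFaces.

Theorem lemma5p7 (N : nat) (D : knot_diagram N) :
  kd_planar D -> ascending D ->
  forall d : dart N, bounded_face D d ->
    [/\ face_sides D d = 1 -> admits_R1 D d,
        face_sides D d = 2 -> admits_R2 D d &
        face_sides D d = 3 -> admits_R3 D d].
Proof.
move=> _ asc d bd; split=> [sides1 | sides2 | sides3].
- by apply: admits_R1_fixed; apply/eqP; rewrite -face_sides1 sides1.
- by apply: bounded_face_over_both; rewrite // -face_sides1 sides2.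
- by apply: bounded_face_over_both; rewrite // -face_sides1 sides3.
Qed.
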